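(* Assume Assumptions A, B, condition (P), and $c_1^2+c_2^2>0$. Then the maximal existence endpoint $R_{\max}$ of the solution $S$ of (IVP) equals $\infty$ (i.e. the solution exists on $[r_0,\infty)$) in each of the following cases: (1a) $c_2\le0<c_1$ and (C1); (1b) $c_1=0>c_2$ and (C4); (2a) $c_1\le0<c_2$ and (C3); (2b) $c_2=0>c_1$ and (C2); (3) $c_1,c_2>0$ and both (C1) and (C3); (4) $c_1,c_2<0$.
   Context: Fix an integer $n\ge2$. For $i=1,2$, $g_i(s)=a^{(i)}_0+a^{(i)}_1s^{\alpha^{(i)}_1}+\dots+a^{(i)}_{N_i}s^{\alpha^{(i)}_{N_i}}$ ($s\ge0$) with $N_i\ge0$, $a^{(i)}_0>0$, $a^{(i)}_j\ge0$, real $0<\alpha^{(i)}_1<\dots<\alpha^{(i)}_{N_i}$; $G_i(u)=g_i(|u|)u$ for $u\in\mathbb R$. Assumption A: $f_1,f_2\in C([0,1])\cap C^1((0,1))$, $f_1(0)=0$, $f_2(1)=0$, $f_1'>0$, $f_2'<0$ on $(0,1)$. Assumption B: $p_c'\in C^1((0,1))$, $p_c'>0$ on $(0,1)$. $F_i(S)=1/(p_c'(S)f_i(S))$. (IVP): $S'(r)=F(r,S(r))$ for $r>r_0$, $S(r_0)=s_0\in(0,1)$, $0<S(r)<1$, with $F(r,S)=G_2(c_2r^{1-n})F_2(S)-G_1(c_1r^{1-n})F_1(S)$; its unique solution on a maximal interval $[r_0,R_{\max})$ exists. Condition (P): $\lim_{S\to0^+}p_c'(S)f_1(S)=\lim_{S\to1^-}p_c'(S)f_2(S)=+\infty$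 (so $F_1(S)\to0$ as $S\to0^+$ and $F_2(S)\to0$ as $S\to1^-$). Conditions: (C1) $\limsup_{S\to0^+}F_1'(S)<\infty$; (C2) $\liminf_{S\to1^-}F_1'(S)>-\infty$; (C3) $\liminf_{S\to1^-}F_2'(S)>-\infty$; (C4) $\limsup_{S\to0^+}F_2'(S)<\infty$. *)

From Stdlib Require Import Reals Lra List Sorting.Sorted.
Import ListNotations.
Open Scope R_scope.

(* s^a for s >= 0 and a > 0, with the convention 0^a = 0. *)
Definition rpow (s a : R) : R := if Rle_dec s 0 then 0 else Rpower s a.

(* g(s) = a0 + sum_j a_j s^{alpha_j}; the list l contains the pairs (a_j, alpha_j). *)
Definition gfun (a0 : R) (l : list (R * R)) (s : R) : R :=
  a0 + fold_right (fun p acc => fst p * rpow s (snd p) + acc) 0 l.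

Definition g_admissible (a0 : R) (l : list (R * R)) : Prop :=
  0 < a0 /\ Forall (fun p => 0 <= fst p /\ 0 < snd p) l /\ Sorted Rlt (map snd l).

Definition Gfun (a0 : R) (l : list (R * R)) (u : R) : R := gfun a0 l (Rabs u) * u.

Definition Ffun (dpc f : R -> R) (S : R) : R := / (dpc S * f S).

Definition rhsF (n : nat) (a01 : R) (l1 : list (R * R)) (a02 : R) (l2 : list (R * R))
  (c1 c2 : R) (dpc f1 f2 : R -> R) (r S : R) : R :=
  Gfun a02 l2 (c2 * / r ^ (n - 1)) * Ffun dpc f2 S
  - Gfun a01 l1 (c1 * / r ^ (n - 1)) * Ffun dpc f1 S.

Definition C1_open (f df : R -> R) (a b : R) : Prop :=
  forall x, a < x < b -> derivable_pt_lim f x (df x) /\ continuity_pt df x.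

Definition cont_closed (f : R -> R) (a b : R) : Prop :=
  forall x, a <= x <= b -> forall eps, 0 < eps ->
    exists delta, 0 < delta /\
      forall y, a <= y <= b -> Rabs (y - x) < delta -> Rabs (f y - f x) < eps.

Definition limsup_deriv_0_finite (h : R -> R) : Prop :=
  exists M delta, 0 < delta /\
    forall S l, 0 < S < delta -> derivable_pt_lim h S l -> l <= M.

Definition liminf_deriv_1_finite (h : R -> R) : Prop :=
  exists M delta, 0 < delta /\
    forall S l, 1 - delta < S < 1 -> derivable_pt_lim h S l -> M <= l.

Definition global_solution (F : R -> R -> R) (r0 s0 : R) (S : R -> R) : Prop :=
  S r0 = s0 /\
  (forall r, r0 <= r -> 0 < S r < 1) /\
  (forall eps, 0 < eps -> exists delta, 0 < delta /\
      forall r, r0 <= r < r0 + delta -> Rabs (S r - s0) < eps) /\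
  (forall r, r0 < r -> derivable_pt_lim S r (F r (S r))).

From Stdlib Require Import Reals List Lra Lia Classical FunctionalExtensionality.
From Coquelicot Require Import Coquelicot.
Open Scope R_scope.

(* Writing G_i(c_i r^(1-n)) = c_i k_i(r) with bounded positive weights k_i, the field is
   c2 k2(r) F2(S) - c1 k1(r) F1(S).  The proof has three layers.
   1. Picard-Lindelof on (-oo, T] for fields continuous in t and uniformly Lipschitz
      in x (contraction in an exponentially weighted norm).
   2. A barrier theorem: if the field is >= -K S near S = 0 and <= K (1 - S) near
      S = 1, uniformly in r >= r0, then the equation truncated to the shrinking band
      [phi, 1 - phi], phi(r) = eps exp(-2K(r - r0)), has a global solution that never
      leaves the band (comparison principle), hence solves the original problem.
   3. The barrier conditions.  By the reflection T = 1 - S the condition at S = 1 is the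
      condition at 0 for the reflected field, so one lemma covers both ends: near 0
      each term is bounded below by -M S as soon as it has a favourable sign or its
      profile is O(S) (this is what (C1)-(C4) give, by the mean value theorem), and when
      both coefficients are negative the term whose profile dominates wins
      (Assumption A gives F2 = o(F1) near 0 and F1 = o(F2) near 1).
   The theorem follows by checking, case by case, which mechanism applies at each end. *)

Lemma continuous_eps (f : R -> R) x : continuous f x <->
  (forall eps, 0 < eps -> exists d, 0 < d /\
     forall y, Rabs (y - x) < d -> Rabs (f y - f x) < eps).
Proof.
  unfold continuous; rewrite <- continuity_pt_filterlim.
  unfold continuity_pt, continue_in, limit1_in, limit_in, D_x, no_cond; simpl; unfold R_dist.
  split; intros H eps He; destruct (H eps He) as [d [Hd H']]; exists d; split; auto.
  - intros y Hy. destruct (Req_dec y x) as [->|Hne].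
    + rewrite Rminus_eq_0, Rabs_R0; auto.
    + apply H'; split; auto.
  - intros y [_ Hy]. apply H'; auto.
Qed.

Lemma continuous_of_pt f x : continuity_pt f x -> continuous f x.
Proof. intros H. apply continuity_pt_filterlim. exact H. Qed.

Lemma ex_RInt_cont (g : R -> R) a b : (forall t, continuous g t) -> ex_RInt g a b.
Proof. intros H. exact (ex_RInt_continuous (V:=R_CompleteNormedModule) g a b (fun z _ => H z)). Qed.

Lemma RInt_abs_bound g h a b : a <= b -> (forall t, continuous g t) -> ex_RInt h a b ->
  (forall t, a <= t <= b -> Rabs (g t) <= h t) -> Rabs (RInt g a b) <= RInt h a b.
Proof.
  intros Hab Hg Hh Hb. eapply Rle_trans.
  - apply abs_RInt_le; auto. apply ex_RInt_cont; auto.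
  - apply RInt_le; auto.
    + apply ex_RInt_cont. intros t. apply continuous_Rabs_comp. auto.
    + intros x Hx. apply Hb; lra.
Qed.

Lemma RInt_const_val M a b : RInt (fun _ => M) a b = M * (b - a).
Proof. rewrite RInt_const. unfold scal; simpl. unfold mult; simpl. ring. Qed.

Lemma RInt_exp_val C L r0 r : 0 < L ->
  RInt (fun t => C * exp (2 * L * (t - r0))) r0 r = C * (exp (2 * L * (r - r0)) - 1) / (2 * L).
Proof.
  intros HL. apply is_RInt_unique.
  replace (C * (exp (2*L*(r-r0)) - 1) / (2*L)) with
    (minus (C * exp (2*L*(r-r0)) / (2*L)) (C * exp (2*L*(r0-r0)) / (2*L))).
  2:{ unfold minus, plus, opp; simpl. rewrite Rminus_eq_0, Rmult_0_r, exp_0. field. lra. }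
  apply (is_RInt_derive (V:=R_CompleteNormedModule) (fun t => C * exp (2*L*(t-r0)) / (2*L))).
  - intros x _. auto_derive; auto. replace (x + - r0) with (x - r0) by ring. field. lra.
  - intros x _. apply (ex_derive_continuous (K:=R_AbsRing) (V:=R_NormedModule)). auto_derive; auto.
Qed.

Lemma is_lim_seq_abs_le (u : nat -> R) (l a c : R) :
  is_lim_seq u l -> (forall j, Rabs (u j - a) <= c) -> Rabs (l - a) <= c.
Proof.
  intros Hl Hb.
  assert (Hb' : forall j, a - c <= u j <= a + c)
    by (intros j; destruct (proj1 (Rabs_le_between _ _) (Hb j)); lra).
  pose proof (is_lim_seq_le (fun _ => a - c) u _ _ (fun j => proj1 (Hb' j)) (is_lim_seq_const _) Hl).
  pose proof (is_lim_seq_le u (fun _ => a + c) _ _ (fun j => proj2 (Hb' j)) Hl (is_lim_seq_const _)).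
  simpl in *. apply Rabs_le. lra.
Qed.

Lemma exp_le_mono x y : x <= y -> exp x <= exp y.
Proof. intros [H|H]; [left; apply exp_increasing; auto|subst; lra]. Qed.

Lemma RInt_upper_continuous (g : R -> R) a (Hg : forall t, continuous g t) x :
  continuous (fun u => RInt g a u) x.
Proof.
  apply (ex_derive_continuous (K:=R_AbsRing) (V:=R_NormedModule)). exists (g x).
  apply (is_derive_RInt (V:=R_NormedModule) g (fun u => RInt g a u) a x); [|apply Hg].
  apply filter_forall. intros b. apply (RInt_correct (V:=R_CompleteNormedModule)). apply ex_RInt_cont; auto.
Qed.

Lemma half_pow_small C eps : 0 < eps -> 0 <= C -> exists k, C * (/2) ^ k < eps.
Proof.
  intros He HC.
  destruct (pow_lt_1_zero (/2) ltac:(rewrite Rabs_pos_eq; lra) (eps / (C+1))) as [N HN].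
  { apply Rdiv_lt_0_compat; lra. }
  exists N. specialize (HN N (le_n N)). rewrite Rabs_pos_eq in HN by (apply pow_le; lra).
  apply Rle_lt_trans with (C * (eps / (C+1))).
  - apply Rmult_le_compat_l; lra.
  - apply (Rmult_lt_reg_r (C+1)); [lra|]. unfold Rdiv.
    rewrite Rmult_assoc, Rmult_assoc, Rinv_l by lra. nra.
Qed.

(* Picard-Lindelof: a right-hand side continuous in t and Lipschitz in x, uniformly
   on every half-line (-oo, T], has a global C^1 solution through (r0, s0).
   The solution is the limit of the Picard iterates, which are frozen at s0 left of r0;
   in the weighted norm exp(-2L(t - r0)) the Picard map is a contraction of ratio 1/2. *)
Definition lip_on_halflines (Ft : R -> R -> R) : Prop :=
  forall T, exists L, 0 < L /\
    forall t x y, t <= T -> Rabs (Ft t x - Ft t y) <= L * Rabs (x - y).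

Section Picard.
Variables (Ft : R -> R -> R) (r0 s0 : R).
Hypothesis Ft_cont : forall x t, continuous (fun t => Ft t x) t.
Hypothesis Ft_lip : lip_on_halflines Ft.

Lemma Ft_along_continuous (x : R -> R) : (forall t, continuous x t) ->
  forall t, continuous (fun u => Ft u (x u)) t.
Proof.
  intros Hx t. destruct (Ft_lip (t + 1)) as [L [HL0 HL]].
  apply continuous_eps. intros eps He.
  destruct (proj1 (continuous_eps _ _) (Ft_cont (x t) t) (eps/2)) as [d1 [Hd1 H1]]; [lra|].
  destruct (proj1 (continuous_eps _ _) (Hx t) (eps/(2*L))) as [d2 [Hd2 H2]].
  { apply Rdiv_lt_0_compat; lra. }
  exists (Rmin 1 (Rmin d1 d2)). split; [repeat apply Rmin_glb_lt; lra|].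
  intros y Hy. pose proof (Rmin_l 1 (Rmin d1 d2)). pose proof (Rmin_r 1 (Rmin d1 d2)).
  pose proof (Rmin_l d1 d2). pose proof (Rmin_r d1 d2).
  specialize (H1 y ltac:(lra)). specialize (H2 y ltac:(lra)).
  assert (Hlip : Rabs (Ft y (x y) - Ft y (x t)) <= L * Rabs (x y - x t)).
  { apply HL. apply Rabs_def2 in Hy. lra. }
  assert (HLe : L * Rabs (x y - x t) <= eps / 2).
  { apply Rle_trans with (L * (eps / (2*L))); [apply Rmult_le_compat_l; lra|].
    right. field. lra. }
  replace (Ft y (x y) - Ft t (x t)) with ((Ft y (x y) - Ft y (x t)) + (Ft y (x t) - Ft t (x t))) by ring.
  eapply Rle_lt_trans; [apply Rabs_triang|]. lra.
Qed.

Fixpoint picard_iter (k : nat) : R -> R :=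
  match k with
  | O => fun _ => s0
  | S k' => fun r => s0 + RInt (fun t => Ft t (picard_iter k' t)) r0 (Rmax r r0)
  end.

Lemma picard_iter_continuous k : forall x, continuous (picard_iter k) x.
Proof.
  induction k as [|k IH]; intros x; simpl.
  - apply continuous_const.
  - apply (continuous_plus (fun _ => s0)); [apply continuous_const|].
    apply (continuous_comp (fun r => Rmax r r0)).
    + apply continuous_eps. intros eps He. exists eps; split; auto. intros y Hy.
      unfold Rmax, Rabs in *; repeat destruct Rle_dec; repeat destruct Rcase_abs; lra.
    + apply RInt_upper_continuous, Ft_along_continuous, IH.
Qed.

Lemma integrand_continuous k t : continuous (fun t => Ft t (picard_iter k t)) t.
Proof. apply Ft_along_continuous, picard_iter_continuous. Qed.

Lemma picard_iter_left k r : r <= r0 -> picard_iter k r = s0.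
Proof.
  destruct k; intros Hr; simpl; auto.
  rewrite Rmax_right, RInt_point by lra. unfold zero; simpl. ring.
Qed.

Definition picard_sol (r : R) : R := real (Lim_seq (fun k => picard_iter k r)).

Section OnCompact.
Variables (L M T : R).
Hypothesis (HL0 : 0 < L) (HT : r0 <= T).
Hypothesis HL : forall t x y, t <= T -> Rabs (Ft t x - Ft t y) <= L * Rabs (x - y).
Hypothesis HM : forall t, r0 <= t <= T -> Rabs (Ft t s0) <= M.

(* Size of the first Picard step on [r0, T]. *)
Let K := M * (T - r0).

Lemma K_nonneg : 0 <= K.
Proof.
  assert (Rabs (Ft r0 s0) <= M) by (apply HM; lra).
  pose proof (Rabs_pos (Ft r0 s0)). unfold K. apply Rmult_le_pos; lra.
Qed.

Lemma picard_step_bound k r : r0 <= r <= T ->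
  Rabs (picard_iter (S k) r - picard_iter k r) <= K * (/2) ^ k * exp (2 * L * (r - r0)).
Proof.
  revert r; induction k as [|k IH]; intros r Hr; pose proof K_nonneg as HK.
  - simpl. rewrite Rmax_left by lra. rewrite Rplus_minus_l.
    eapply Rle_trans.
    + apply (RInt_abs_bound _ (fun _ => M)); [lra|apply (integrand_continuous 0)|apply ex_RInt_const|].
      intros t Ht. apply HM; lra.
    + rewrite RInt_const_val.
      assert (1 <= exp (2 * L * (r - r0))).
      { rewrite <- exp_0. apply exp_le_mono. apply Rmult_le_pos; lra. }
      assert (M * (r - r0) <= K) by (unfold K; pose proof (Rabs_pos (Ft r0 s0));
        assert (Rabs (Ft r0 s0) <= M) by (apply HM; lra); apply Rmult_le_compat_l; lra).
      simpl. nra.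
  - change (picard_iter (S (S k)) r - picard_iter (S k) r) with
      (s0 + RInt (fun t => Ft t (picard_iter (S k) t)) r0 (Rmax r r0)
       - (s0 + RInt (fun t => Ft t (picard_iter k t)) r0 (Rmax r r0))).
    rewrite Rmax_left by lra.
    set (g1 := fun t => Ft t (picard_iter (S k) t)). set (g0 := fun t => Ft t (picard_iter k t)).
    assert (E : RInt g1 r0 r - RInt g0 r0 r = RInt (fun t => g1 t - g0 t) r0 r).
    { symmetry. exact (RInt_minus (V:=R_CompleteNormedModule) g1 g0 r0 r
        (ex_RInt_cont _ _ _ (integrand_continuous (S k))) (ex_RInt_cont _ _ _ (integrand_continuous k))). }
    replace (s0 + RInt g1 r0 r - (s0 + RInt g0 r0 r)) with (RInt g1 r0 r - RInt g0 r0 r) by ring.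
    rewrite E. eapply Rle_trans.
    + apply (RInt_abs_bound _ (fun t => (L * (K * (/2) ^ k)) * exp (2 * L * (t - r0)))); [lra| | |].
      * intros t. apply (continuous_minus (V:=R_NormedModule)); apply integrand_continuous.
      * apply ex_RInt_cont. intros t. apply (ex_derive_continuous (K:=R_AbsRing) (V:=R_NormedModule)).
        auto_derive; auto.
      * intros t Ht. unfold g1, g0. eapply Rle_trans; [apply HL; lra|].
        rewrite Rmult_assoc. apply Rmult_le_compat_l; [lra|]. apply IH; lra.
    + rewrite RInt_exp_val by exact HL0.
      assert (0 <= K * (/2) ^ k) by (apply Rmult_le_pos; [lra|apply pow_le; lra]).
      pose proof (exp_pos (2 * L * (r - r0))).
      simpl. unfold Rdiv. field_simplify; [|lra]. nra.
Qed.

Let cauchy_const := 2 * (K * exp (2 * L * (T - r0))).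

Lemma Cb_nonneg : 0 <= cauchy_const.
Proof. pose proof K_nonneg. pose proof (exp_pos (2 * L * (T - r0))). unfold cauchy_const. nra. Qed.

Lemma half_pow_antitone k j : (/2) ^ (k + j) <= (/2) ^ k.
Proof.
  induction j as [|j IH]; [rewrite Nat.add_0_r; lra|].
  rewrite Nat.add_succ_r. simpl. pose proof (pow_le (/2) (k + j) ltac:(lra)). lra.
Qed.

(* Summing the geometric step bounds: the iterates are uniformly Cauchy on (-oo, T]. *)
Lemma picard_cauchy k j r : r <= T ->
  Rabs (picard_iter (k + j) r - picard_iter k r) <= cauchy_const * ((/2) ^ k - (/2) ^ (k + j)).
Proof.
  intros Hr. pose proof Cb_nonneg. pose proof (half_pow_antitone k j).
  destruct (Rle_dec r r0) as [Hr0|Hr0].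
  { rewrite !picard_iter_left, Rminus_eq_0, Rabs_R0 by lra. nra. }
  induction j as [|j IH].
  { rewrite Nat.add_0_r, Rminus_eq_0, Rabs_R0. lra. }
  rewrite Nat.add_succ_r. pose proof (half_pow_antitone k j).
  replace (picard_iter (S (k + j)) r - picard_iter k r) with
    ((picard_iter (S (k + j)) r - picard_iter (k + j) r) + (picard_iter (k + j) r - picard_iter k r)) by ring.
  eapply Rle_trans; [apply Rabs_triang|].
  pose proof (picard_step_bound (k + j) r ltac:(lra)) as Hstep.
  assert (exp (2 * L * (r - r0)) <= exp (2 * L * (T - r0))) by (apply exp_le_mono; nra).
  assert (0 <= K * (/2) ^ (k + j)) by (apply Rmult_le_pos; [apply K_nonneg|apply pow_le; lra]).
  replace ((/2) ^ S (k + j)) with ((/2) ^ (k + j) * /2) by (simpl; ring).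
  unfold cauchy_const in *. nra.
Qed.

Lemma picard_sol_approx k r : r <= T -> Rabs (picard_sol r - picard_iter k r) <= cauchy_const * (/2) ^ k.
Proof.
  intros Hr. pose proof Cb_nonneg.
  assert (Hlim : is_lim_seq (fun k => picard_iter k r) (picard_sol r)).
  { assert (Hex : ex_finite_lim_seq (fun k => picard_iter k r)).
    { apply ex_lim_seq_cauchy_corr. intros eps.
      destruct (half_pow_small cauchy_const eps (cond_pos eps) Cb_nonneg) as [N HN].
      exists N. intros p q Hp Hq.
      assert (Hgen : forall a b, (N <= a)%nat -> (a <= b)%nat ->
                Rabs (picard_iter b r - picard_iter a r) < eps).
      { intros a b Ha Hab. replace b with (a + (b - a))%nat by lia.
        eapply Rle_lt_trans; [apply picard_cauchy; auto|].
        pose proof (pow_le (/2) (a + (b - a)) ltac:(lra)).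
        pose proof (half_pow_antitone N (a - N)). replace (N + (a - N))%nat with a in * by lia. nra. }
      destruct (Nat.le_ge_cases p q).
      - rewrite <- Rabs_Ropp, Ropp_minus_distr. apply Hgen; lia.
      - apply Hgen; lia. }
    destruct Hex as [l Hl]. unfold picard_sol. rewrite (is_lim_seq_unique _ _ Hl). exact Hl. }
  apply (is_lim_seq_incr_n _ k) in Hlim.
  apply (is_lim_seq_abs_le _ _ _ _ Hlim). intros j. rewrite Nat.add_comm.
  pose proof (pow_le (/2) (k + j) ltac:(lra)). pose proof (picard_cauchy k j r Hr). nra.
Qed.

End OnCompact.

Lemma picard_sol_uniform T : r0 <= T -> exists C L, 0 <= C /\ 0 < L /\
  (forall t x y, t <= T -> Rabs (Ft t x - Ft t y) <= L * Rabs (x - y)) /\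
  forall k r, r <= T -> Rabs (picard_sol r - picard_iter k r) <= C * (/2) ^ k.
Proof.
  intros HT. destruct (Ft_lip T) as [L [HL0 HL]].
  destruct (continuity_ab_maj (fun t => Rabs (Ft t s0)) r0 T HT) as [m [Hm _]].
  { intros c _. apply continuity_pt_filterlim. apply (continuous_Rabs_comp (fun t => Ft t s0)), Ft_cont. }
  exists (2 * (Rabs (Ft m s0) * (T - r0) * exp (2 * L * (T - r0)))), L. repeat split; auto.
  - eapply Cb_nonneg; eauto.
  - intros k r Hr. eapply picard_sol_approx; eauto.
Qed.

Lemma picard_sol_left r : r <= r0 -> picard_sol r = s0.
Proof.
  intros Hr. unfold picard_sol. rewrite (Lim_seq_ext _ (fun _ => s0)), Lim_seq_const; auto.
  intros k. apply picard_iter_left; auto.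
Qed.

Lemma zero_of_half_pow_bound z D : (forall k, Rabs z <= D * (/2) ^ k) -> z = 0.
Proof.
  intros H. destruct (Req_dec z 0) as [|Hz]; auto. exfalso.
  assert (HD : 0 <= D) by (specialize (H O); simpl in H; pose proof (Rabs_pos z); lra).
  destruct (half_pow_small D (Rabs z)) as [k Hk]; auto. apply Rabs_pos_lt; auto.
  specialize (H k). lra.
Qed.

Lemma picard_sol_continuous x : continuous picard_sol x.
Proof.
  apply continuous_eps. intros eps He.
  destruct (picard_sol_uniform (Rmax x r0 + 1)) as [C [L [HC [_ [_ Hb]]]]].
  { pose proof (Rmax_r x r0). lra. }
  destruct (half_pow_small C (eps/3)) as [k Hk]; auto; try lra.
  destruct (proj1 (continuous_eps _ _) (picard_iter_continuous k x) (eps/3)) as [d [Hd Hd']]; [lra|].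
  exists (Rmin 1 d). split; [apply Rmin_glb_lt; lra|].
  intros y Hy. pose proof (Rmin_l 1 d). pose proof (Rmin_r 1 d). pose proof (Rmax_l x r0).
  pose proof (Hd' y ltac:(lra)). apply Rabs_def2 in Hy.
  pose proof (Hb k y ltac:(lra)). pose proof (Hb k x ltac:(lra)).
  replace (picard_sol y - picard_sol x) with
    ((picard_sol y - picard_iter k y) + (picard_iter k y - picard_iter k x)
     - (picard_sol x - picard_iter k x)) by ring.
  eapply Rle_lt_trans; [apply Rabs_triang|]. rewrite Rabs_Ropp.
  eapply Rle_lt_trans; [apply Rplus_le_compat_r, Rabs_triang|]. lra.
Qed.

Lemma sol_integrand_continuous t : continuous (fun t => Ft t (picard_sol t)) t.
Proof. apply Ft_along_continuous, picard_sol_continuous. Qed.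

Lemma picard_sol_integral r : r0 <= r -> picard_sol r = s0 + RInt (fun t => Ft t (picard_sol t)) r0 r.
Proof.
  intros Hr. destruct (picard_sol_uniform r Hr) as [C [L [HC [HL0 [HL Hb]]]]].
  set (gs := fun t => Ft t (picard_sol t)).
  enough (picard_sol r - s0 - RInt gs r0 r = 0) by lra.
  apply (zero_of_half_pow_bound _ (C * (1 + L * (r - r0)))). intros k.
  set (gk := fun t => Ft t (picard_iter k t)).
  assert (E : RInt (fun t => gk t - gs t) r0 r = RInt gk r0 r - RInt gs r0 r).
  { exact (RInt_minus (V:=R_CompleteNormedModule) _ _ r0 r
      (ex_RInt_cont _ _ _ (integrand_continuous k)) (ex_RInt_cont _ _ _ sol_integrand_continuous)). }
  assert (H1 : Rabs (RInt gk r0 r - RInt gs r0 r) <= L * (C * (/2) ^ k) * (r - r0)).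
  { rewrite <- E, <- RInt_const_val. apply RInt_abs_bound; auto.
    - intros t. apply (continuous_minus (V:=R_NormedModule)); [apply integrand_continuous|apply sol_integrand_continuous].
    - apply ex_RInt_const.
    - intros t Ht. eapply Rle_trans; [apply HL; lra|]. apply Rmult_le_compat_l; [lra|].
      rewrite <- Rabs_Ropp, Ropp_minus_distr. apply Hb; lra. }
  pose proof (Hb (S k) r (Rle_refl r)) as H2.
  simpl picard_iter in H2. rewrite Rmax_left in H2 by lra. fold gk in H2.
  replace (picard_sol r - s0 - RInt gs r0 r) with
    ((picard_sol r - (s0 + RInt gk r0 r)) + (RInt gk r0 r - RInt gs r0 r)) by ring.
  eapply Rle_trans; [apply Rabs_triang|].
  replace ((/2) ^ S k) with ((/2) ^ k * /2) in H2 by (simpl; ring).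
  assert (0 <= C * (/2) ^ k) by (apply Rmult_le_pos; [lra|apply pow_le; lra]).
  nra.
Qed.

Theorem picard : exists S : R -> R, (forall t, t <= r0 -> S t = s0) /\ (forall t, continuous S t) /\
  forall r, r0 < r -> derivable_pt_lim S r (Ft r (S r)).
Proof.
  exists picard_sol. split; [exact picard_sol_left|split; [exact picard_sol_continuous|]].
  intros r Hr. apply is_derive_Reals.
  apply (is_derive_ext_loc (fun u => s0 + RInt (fun t => Ft t (picard_sol t)) r0 u)).
  { apply (locally_interval _ r (Finite r0) p_infty); simpl; auto.
    intros y Hy _. symmetry. apply picard_sol_integral. lra. }
  rewrite <- (Rplus_0_l (Ft r (picard_sol r))).
  apply (is_derive_plus (fun _ => s0)); [apply (is_derive_const (K:=R_AbsRing) (V:=R_NormedModule))|].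
  apply (is_derive_RInt (V:=R_NormedModule) (fun t => Ft t (picard_sol t)) _ r0); [|apply sol_integrand_continuous].
  apply filter_forall. intros b. apply (RInt_correct (V:=R_CompleteNormedModule)).
  apply ex_RInt_cont, sol_integrand_continuous.
Qed.

End Picard.

(* If a continuous h with h r0 > 0 is nonpositive somewhere after r0, there is a first
   such point tau (the supremum of the initial interval of positivity). *)
Lemma first_nonpositive_point (h : R -> R) r0 t2 : (forall t, continuous h t) ->
  0 < h r0 -> r0 <= t2 -> h t2 <= 0 ->
  exists tau, r0 < tau /\ h tau <= 0 /\ forall u, r0 <= u < tau -> 0 < h u.
Proof.
  intros Hc H0 Ht2 Hneg.
  set (E := fun x => r0 <= x <= t2 /\ forall u, r0 <= u <= x -> 0 < h u).
  assert (HE0 : E r0) by (split; [lra|intros u Hu; replace u with r0 by lra; auto]).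
  destruct (completeness E) as [tau [Hub Hlub]].
  { exists t2. intros x [Hx _]. lra. }
  { exists r0. exact HE0. }
  assert (Hr0tau : r0 <= tau) by (apply Hub, HE0).
  assert (Htaut2 : tau <= t2) by (apply Hlub; intros x [Hx _]; lra).
  assert (Hbefore : forall u, r0 <= u < tau -> 0 < h u).
  { intros u Hu. destruct (classic (exists x, E x /\ u < x)) as [[x [[_ Hx] Hux]]|Hno].
    - apply Hx; lra.
    - exfalso. assert (tau <= u); [|lra]. apply Hlub. intros x Ex.
      apply Rnot_lt_le. intros Hlt. apply Hno. exists x; auto. }
  assert (Hat : h tau <= 0).
  { apply Rnot_lt_le. intros Hpos.
    destruct (proj1 (continuous_eps _ _) (Hc tau) (h tau) Hpos) as [d [Hd0 Hd']].
    assert (tau < t2) by (destruct (Req_dec tau t2); [subst; lra|lra]).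
    set (x := Rmin (tau + d/2) t2).
    assert (tau < x) by (unfold x; apply Rmin_glb_lt; lra).
    enough (HEx : E x) by (specialize (Hub x HEx); lra).
    split; [split; [lra|apply Rmin_r]|]. intros u Hu.
    destruct (Rlt_le_dec u tau); [apply Hbefore; lra|].
    assert (Hud : Rabs (u - tau) < d).
    { pose proof (Rmin_l (tau + d/2) t2). apply Rabs_def1; unfold x in *; lra. }
    specialize (Hd' u Hud). apply Rabs_def2 in Hd'. lra. }
  exists tau. repeat split; auto.
  destruct (Req_dec tau r0) as [->|]; lra.
Qed.

Lemma derivative_at_first_nonpositive (h : R -> R) r0 tau d :
  r0 < tau -> h tau <= 0 -> (forall u, r0 <= u < tau -> 0 < h u) ->
  derivable_pt_lim h tau d -> d <= 0.
Proof.
  intros Hr0 Hat Hbefore Hder. apply Rnot_lt_le. intros Hd.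
  destruct (Hder (d/2) ltac:(lra)) as [del Hdel].
  set (k := - Rmin (del/2) ((tau - r0)/2)).
  assert (Hk1 : 0 < Rmin (del/2) ((tau - r0)/2)) by (apply Rmin_glb_lt; pose proof (cond_pos del); lra).
  pose proof (Rmin_l (del/2) ((tau - r0)/2)). pose proof (Rmin_r (del/2) ((tau - r0)/2)).
  assert (Hkd : Rabs k < del).
  { unfold k. rewrite Rabs_Ropp, Rabs_pos_eq by lra. pose proof (cond_pos del). lra. }
  specialize (Hdel k ltac:(unfold k; lra) Hkd). apply Rabs_def2 in Hdel.
  assert (0 < h (tau + k)) by (apply Hbefore; unfold k; lra).
  assert (/ k < 0) by (apply Rinv_lt_0_compat; unfold k; lra).
  assert ((h (tau + k) - h tau) / k < 0) by (unfold Rdiv; nra).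
  lra.
Qed.

Lemma stays_positive (h : R -> R) r0 (Hc : forall t, continuous h t) (H0 : 0 < h r0)
  (Hd : forall t, r0 < t -> h t <= 0 -> exists d, derivable_pt_lim h t d /\ 0 < d) :
  forall t, r0 <= t -> 0 < h t.
Proof.
  intros t2 Ht2. apply Rnot_le_lt. intros Hneg.
  destruct (first_nonpositive_point h r0 t2 Hc H0 Ht2 Hneg) as [tau [Htau [Hat Hbefore]]].
  destruct (Hd tau Htau Hat) as [d [Hder Hdpos]].
  pose proof (derivative_at_first_nonpositive h r0 tau d Htau Hat Hbefore Hder). lra.
Qed.

(* Pointwise continuity of combinations, in a form that unifies with lambda terms. *)
Lemma cpt_mult f g x : continuity_pt f x -> continuity_pt g x -> continuity_pt (fun y => f y * g y) x.
Proof. intros; apply (continuity_pt_mult f g x); auto. Qed.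
Lemma cpt_plus f g x : continuity_pt f x -> continuity_pt g x -> continuity_pt (fun y => f y + g y) x.
Proof. intros; apply (continuity_pt_plus f g x); auto. Qed.
Lemma cpt_minus f g x : continuity_pt f x -> continuity_pt g x -> continuity_pt (fun y => f y - g y) x.
Proof. intros; apply (continuity_pt_minus f g x); auto. Qed.
Lemma cpt_const c x : continuity_pt (fun _ => c) x.
Proof. apply continuity_pt_const. intros a b; auto. Qed.
Lemma cpt_id x : continuity_pt (fun y => y) x.
Proof. apply derivable_continuous_pt, derivable_pt_id. Qed.
Lemma cpt_comp f g x : continuity_pt f x -> continuity_pt g (f x) -> continuity_pt (fun y => g (f y)) x.
Proof. intros; apply (continuity_pt_comp f g x); auto. Qed.
Lemma cpt_abs f x : continuity_pt f x -> continuity_pt (fun y => Rabs (f y)) x.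
Proof. intros; apply cpt_comp; auto. apply Rcontinuity_abs. Qed.
Lemma cpt_Rmax f g x : continuity_pt f x -> continuity_pt g x -> continuity_pt (fun y => Rmax (f y) (g y)) x.
Proof.
  intros. apply (continuity_pt_ext (fun y => (f y + g y + Rabs (f y - g y)) * /2)).
  { intros y. unfold Rmax, Rabs. destruct Rle_dec; destruct Rcase_abs; lra. }
  apply cpt_mult; [|apply cpt_const]. apply cpt_plus; [apply cpt_plus; auto|]. apply cpt_abs, cpt_minus; auto.
Qed.
Lemma cpt_Rmin f g x : continuity_pt f x -> continuity_pt g x -> continuity_pt (fun y => Rmin (f y) (g y)) x.
Proof.
  intros. apply (continuity_pt_ext (fun y => (f y + g y - Rabs (f y - g y)) * /2)).
  { intros y. unfold Rmin, Rabs. destruct Rle_dec; destruct Rcase_abs; lra. }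
  apply cpt_mult; [|apply cpt_const]. apply cpt_minus; [apply cpt_plus; auto|]. apply cpt_abs, cpt_minus; auto.
Qed.

Lemma C1_continuity g dg x : C1_open g dg 0 1 -> 0 < x < 1 -> continuity_pt g x.
Proof. intros H Hx. apply derivable_continuous_pt. exists (dg x). apply (H x Hx). Qed.

Lemma C1_lipschitz g dg al be : C1_open g dg 0 1 -> 0 < al -> al <= be -> be < 1 ->
  exists L, 0 <= L /\ forall x y, al <= x <= be -> al <= y <= be -> Rabs (g x - g y) <= L * Rabs (x - y).
Proof.
  intros H Ha Hab Hb.
  destruct (continuity_ab_maj (fun x => Rabs (dg x)) al be Hab) as [m [Hm Hmr]].
  { intros c Hc. apply cpt_abs. apply (H c). lra. }
  exists (Rabs (dg m)). split; [apply Rabs_pos|].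
  intros x y Hx Hy.
  assert (Hmin : Rmin y x >= al) by (unfold Rmin; destruct Rle_dec; lra).
  assert (Hmax : Rmax y x <= be) by (unfold Rmax; destruct Rle_dec; lra).
  destruct (MVT_abs g dg y x) as [c [Hc Hcr]].
  { intros c Hc. apply H. pose proof (Rmin_l y x). pose proof (Rmax_r y x). lra. }
  rewrite Hc. apply Rmult_le_compat_r; [apply Rabs_pos|]. apply Hm. lra.
Qed.

Definition lower_barrier_cond (F : R -> R -> R) (r0 : R) : Prop :=
  exists d K, 0 < d /\ 0 < K /\ forall t S, r0 <= t -> 0 < S < d -> - K * S <= F t S.
Definition upper_barrier_cond (F : R -> R -> R) (r0 : R) : Prop :=
  exists d K, 0 < d /\ 0 < K /\ forall t S, r0 <= t -> 1 - d < S < 1 -> F t S <= K * (1 - S).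

(* Global existence for S' = a(t) F2(S) - b(t) F1(S) in (0,1) under the barrier
   conditions: solve the equation truncated to the shrinking band
   [phi t, 1 - phi t], phi t = eps exp(-2K(t - r0)), where the field is Lipschitz;
   the barrier conditions make S - phi and 1 - phi - S stay positive, so the
   truncation is never active and the solution of the truncated problem is global. *)
Section Truncation.
Variables (a b F1 F2 dF1 dF2 : R -> R) (r0 s0 eps K : R).
Hypotheses (HF1 : C1_open F1 dF1 0 1) (HF2 : C1_open F2 dF2 0 1).
Hypotheses (Ha : forall t, r0 <= t -> continuity_pt a t) (Hb : forall t, r0 <= t -> continuity_pt b t).
Hypotheses (Heps : 0 < eps) (Hs0 : eps < s0 < 1 - eps) (HK : 0 < K).
Let F t S := a t * F2 S - b t * F1 S.
Hypothesis Hlower : forall t S, r0 <= t -> 0 < S <= eps -> - K * S <= F t S.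
Hypothesis Hupper : forall t S, r0 <= t -> 1 - eps <= S < 1 -> F t S <= K * (1 - S).

Definition band (t : R) : R := eps * exp (- (2 * K) * (t - r0)).

Lemma band_pos t : 0 < band t.
Proof. apply Rmult_lt_0_compat; [lra|apply exp_pos]. Qed.

Lemma band_le_eps t : r0 <= t -> band t <= eps.
Proof.
  intros Ht. unfold band. rewrite <- (Rmult_1_r eps) at 2. apply Rmult_le_compat_l; [lra|].
  rewrite <- exp_0. apply exp_le_mono. nra.
Qed.

Lemma band_antitone t u : t <= u -> band u <= band t.
Proof. intros Htu. unfold band. apply Rmult_le_compat_l; [lra|]. apply exp_le_mono. nra. Qed.

Lemma band_derivative t : derivable_pt_lim band t (- (2 * K) * band t).
Proof. apply is_derive_Reals. unfold band. auto_derive; auto. replace (t + - r0) with (t - r0) by ring. ring. Qed.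

Lemma band_continuous t : continuity_pt band t.
Proof. apply derivable_continuous_pt. exists (- (2 * K) * band t). apply band_derivative. Qed.

Definition clamp (t x : R) : R := Rmax (band (Rmax t r0)) (Rmin (1 - band (Rmax t r0)) x).

Lemma clamp_bounds t x : band (Rmax t r0) <= clamp t x <= 1 - band (Rmax t r0).
Proof.
  pose proof (band_le_eps _ (Rmax_r t r0)). unfold clamp. set (p := band (Rmax t r0)) in *.
  unfold Rmax, Rmin. repeat destruct Rle_dec; lra.
Qed.

Lemma clamp_id t x : r0 <= t -> band t <= x <= 1 - band t -> clamp t x = x.
Proof.
  intros Ht Hx. unfold clamp. rewrite (Rmax_left t r0) by lra.
  unfold Rmax, Rmin. repeat destruct Rle_dec; lra.
Qed.

Lemma clamp_below t x : r0 <= t -> x <= band t -> clamp t x = band t.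
Proof.
  intros Ht Hx. pose proof (band_le_eps t Ht). unfold clamp. rewrite (Rmax_left t r0) by lra.
  unfold Rmax, Rmin. repeat destruct Rle_dec; lra.
Qed.

Lemma clamp_above t x : r0 <= t -> 1 - band t <= x -> clamp t x = 1 - band t.
Proof.
  intros Ht Hx. pose proof (band_le_eps t Ht). unfold clamp. rewrite (Rmax_left t r0) by lra.
  unfold Rmax, Rmin. repeat destruct Rle_dec; lra.
Qed.

Lemma clamp_lipschitz t x y : Rabs (clamp t x - clamp t y) <= Rabs (x - y).
Proof.
  unfold clamp. set (p := band (Rmax t r0)).
  unfold Rabs, Rmax, Rmin; repeat destruct Rcase_abs; repeat destruct Rle_dec; lra.
Qed.

Definition truncated_field (t x : R) : R := F (Rmax t r0) (clamp t x).

Lemma truncated_field_continuous x t : continuous (fun t => truncated_field t x) t.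
Proof.
  apply continuous_of_pt. unfold truncated_field, F.
  assert (Htt : continuity_pt (fun t => Rmax t r0) t) by (apply cpt_Rmax; [apply cpt_id|apply cpt_const]).
  assert (Hclamp : continuity_pt (fun t => clamp t x) t).
  { unfold clamp. apply cpt_Rmax; [apply cpt_comp; auto; apply band_continuous|].
    apply cpt_Rmin; [|apply cpt_const]. apply cpt_minus; [apply cpt_const|].
    apply cpt_comp; auto. apply band_continuous. }
  pose proof (clamp_bounds t x). pose proof (band_pos (Rmax t r0)).
  pose proof (band_le_eps _ (Rmax_r t r0)).
  apply cpt_minus; apply cpt_mult; apply cpt_comp; auto.
  - apply Ha, Rmax_r.
  - apply (C1_continuity _ _ _ HF2). lra.
  - apply Hb, Rmax_r.
  - apply (C1_continuity _ _ _ HF1). lra.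
Qed.

Lemma truncated_field_lipschitz : lip_on_halflines truncated_field.
Proof.
  intros T. set (T' := Rmax T r0). set (al := band T').
  assert (Hal : 0 < al <= eps) by (split; [apply band_pos|apply band_le_eps, Rmax_r]).
  destruct (C1_lipschitz F1 dF1 al (1 - al) HF1 ltac:(lra) ltac:(lra) ltac:(lra)) as [L1 [HL1 HL1']].
  destruct (C1_lipschitz F2 dF2 al (1 - al) HF2 ltac:(lra) ltac:(lra) ltac:(lra)) as [L2 [HL2 HL2']].
  destruct (continuity_ab_maj (fun t => Rabs (a t)) r0 T' (Rmax_r T r0)) as [ma [Hma _]].
  { intros t Ht. apply cpt_abs, Ha. lra. }
  destruct (continuity_ab_maj (fun t => Rabs (b t)) r0 T' (Rmax_r T r0)) as [mb [Hmb _]].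
  { intros t Ht. apply cpt_abs, Hb. lra. }
  set (A := Rabs (a ma)). set (B := Rabs (b mb)).
  exists (A * L2 + B * L1 + 1). split; [unfold A, B; pose proof (Rabs_pos (a ma)); pose proof (Rabs_pos (b mb)); nra|].
  intros t x y Ht. unfold truncated_field, F.
  set (t' := Rmax t r0). set (kx := clamp t x). set (ky := clamp t y).
  assert (Ht' : r0 <= t' <= T') by (unfold t', T', Rmax; repeat destruct Rle_dec; lra).
  assert (Hk : forall z, al <= clamp t z <= 1 - al).
  { intros z. pose proof (clamp_bounds t z) as Hcb. fold t' in Hcb.
    pose proof (band_antitone t' T' (proj2 Ht')). unfold al. lra. }
  pose proof (HL2' kx ky (Hk x) (Hk y)). pose proof (HL1' kx ky (Hk x) (Hk y)).
  pose proof (clamp_lipschitz t x y) as Hcl. fold kx ky in Hcl.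
  pose proof (Hma t' Ht') as HA. pose proof (Hmb t' Ht') as HB. fold A B in HA, HB.
  replace (a t' * F2 kx - b t' * F1 kx - (a t' * F2 ky - b t' * F1 ky))
    with (a t' * (F2 kx - F2 ky) - b t' * (F1 kx - F1 ky)) by ring.
  eapply Rle_trans; [apply Rabs_triang|]. rewrite Rabs_Ropp, !Rabs_mult.
  pose proof (Rabs_pos (a t')). pose proof (Rabs_pos (b t')). pose proof (Rabs_pos (x - y)).
  pose proof (Rabs_pos (F2 kx - F2 ky)). pose proof (Rabs_pos (F1 kx - F1 ky)).
  assert (Rabs (a t') * Rabs (F2 kx - F2 ky) <= A * (L2 * Rabs (x - y))) by (apply Rmult_le_compat; nra).
  assert (Rabs (b t') * Rabs (F1 kx - F1 ky) <= B * (L1 * Rabs (x - y))) by (apply Rmult_le_compat; nra).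
  nra.
Qed.

Section BandInvariance.
Variable S : R -> R.
Hypotheses (HS0 : forall t, t <= r0 -> S t = s0) (HSc : forall t, continuous S t).
Hypothesis HSd : forall r, r0 < r -> derivable_pt_lim S r (truncated_field r (S r)).

(* When S touches the lower edge of the band, the lower barrier condition gives
   (S - band)' >= -K band + 2K band > 0. *)
Lemma above_band t : r0 <= t -> band t < S t.
Proof.
  intros Ht. enough (0 < S t - band t) by lra. revert t Ht. apply stays_positive.
  - intros t. apply continuous_of_pt, cpt_minus; [apply continuity_pt_filterlim, HSc|apply band_continuous].
  - rewrite HS0 by lra. unfold band. rewrite Rminus_eq_0, Rmult_0_r, exp_0. lra.
  - intros t Ht Hle. exists (truncated_field t (S t) - (- (2 * K) * band t)). split.
    + apply derivable_pt_lim_minus; [apply HSd; auto|apply band_derivative].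
    + pose proof (band_pos t). pose proof (band_le_eps t ltac:(lra)).
      unfold truncated_field. rewrite (Rmax_left t r0), clamp_below by lra.
      pose proof (Hlower t (band t) ltac:(lra) ltac:(lra)). nra.
Qed.

Lemma below_band t : r0 <= t -> S t < 1 - band t.
Proof.
  intros Ht. enough (0 < (1 - band t) - S t) by lra. revert t Ht. apply stays_positive.
  - intros t. apply continuous_of_pt, cpt_minus; [apply cpt_minus; [apply cpt_const|apply band_continuous]|].
    apply continuity_pt_filterlim, HSc.
  - rewrite HS0 by lra. unfold band. rewrite Rminus_eq_0, Rmult_0_r, exp_0. lra.
  - intros t Ht Hle. exists (0 - (- (2 * K) * band t) - truncated_field t (S t)). split.
    + apply derivable_pt_lim_minus; [|apply HSd; auto].
      apply derivable_pt_lim_minus; [apply derivable_pt_lim_const|apply band_derivative].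
    + pose proof (band_pos t). pose proof (band_le_eps t ltac:(lra)).
      unfold truncated_field. rewrite (Rmax_left t r0), clamp_above by lra.
      pose proof (Hupper t (1 - band t) ltac:(lra) ltac:(lra)). nra.
Qed.
End BandInvariance.

Theorem truncation_global_solution : exists S, global_solution F r0 s0 S.
Proof.
  destruct (picard truncated_field r0 s0 truncated_field_continuous truncated_field_lipschitz)
    as [S [HS0 [HSc HSd]]].
  pose proof (above_band S HS0 HSc HSd) as Habove. pose proof (below_band S HS0 HSc HSd) as Hbelow.
  exists S. split; [|split; [|split]].
  - apply HS0; lra.
  - intros r Hr. pose proof (Habove r Hr). pose proof (Hbelow r Hr). pose proof (band_pos r). lra.
  - intros e He. destruct (proj1 (continuous_eps _ _) (HSc r0) e He) as [d [Hd Hd']].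
    exists d. split; auto. intros r Hr. rewrite <- (HS0 r0) by lra. apply Hd'.
    rewrite Rabs_pos_eq; lra.
  - intros r Hr. replace (F r (S r)) with (truncated_field r (S r)); [apply HSd; auto|].
    pose proof (Habove r ltac:(lra)). pose proof (Hbelow r ltac:(lra)).
    unfold truncated_field. rewrite (Rmax_left r r0), clamp_id by lra. reflexivity.
Qed.
End Truncation.

Theorem barrier_global_existence (a b F1 F2 dF1 dF2 : R -> R) r0 s0 :
  0 < s0 < 1 -> C1_open F1 dF1 0 1 -> C1_open F2 dF2 0 1 ->
  (forall t, r0 <= t -> continuity_pt a t) -> (forall t, r0 <= t -> continuity_pt b t) ->
  lower_barrier_cond (fun t S => a t * F2 S - b t * F1 S) r0 ->
  upper_barrier_cond (fun t S => a t * F2 S - b t * F1 S) r0 ->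
  exists S, global_solution (fun t S => a t * F2 S - b t * F1 S) r0 s0 S.
Proof.
  intros Hs0 HF1 HF2 Ha Hb [d1 [K1 [Hd1 [HK1 Hlow]]]] [d2 [K2 [Hd2 [HK2 Hup]]]].
  set (eps := Rmin (Rmin d1 d2) (Rmin s0 (1 - s0)) / 2).
  assert (Hm : 0 < Rmin (Rmin d1 d2) (Rmin s0 (1 - s0))) by (repeat apply Rmin_glb_lt; lra).
  pose proof (Rmin_l (Rmin d1 d2) (Rmin s0 (1 - s0))). pose proof (Rmin_r (Rmin d1 d2) (Rmin s0 (1 - s0))).
  pose proof (Rmin_l d1 d2). pose proof (Rmin_r d1 d2). pose proof (Rmin_l s0 (1 - s0)). pose proof (Rmin_r s0 (1 - s0)).
  apply (truncation_global_solution a b F1 F2 dF1 dF2 r0 s0 eps (K1 + K2)); auto; unfold eps; try lra.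
  - intros t S Ht HS. pose proof (Hlow t S Ht ltac:(lra)). nra.
  - intros t S Ht HS. pose proof (Hup t S Ht ltac:(lra)). nra.
Qed.

(* Behaviour of functions at the endpoint 0+ (the endpoint 1- is reduced to it by
   the reflection T = 1 - S). *)
Definition reflect (h : R -> R) : R -> R := fun T => h (1 - T).
Definition vanishes_at_0 (h : R -> R) : Prop :=
  forall e, 0 < e -> exists d, 0 < d /\ forall S, 0 < S < d -> h S < e.
Definition dominated_at_0 (P Q : R -> R) : Prop :=
  forall r, 0 < r -> exists d, 0 < d /\ forall S, 0 < S < d -> r * P S <= Q S.
Definition linear_at_0 (h : R -> R) : Prop :=
  exists M d, 0 < d /\ forall S, 0 < S < d -> h S <= M * S.

Lemma vanishes_of_dominated P Q : dominated_at_0 P Q -> vanishes_at_0 Q -> vanishes_at_0 P.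
Proof.
  intros Hdom HQ e He. destruct (Hdom 1 Rlt_0_1) as [d1 [Hd1 H1]]. destruct (HQ e He) as [d2 [Hd2 H2]].
  exists (Rmin d1 d2). split; [apply Rmin_glb_lt; auto|]. intros S HS.
  pose proof (Rmin_l d1 d2). pose proof (Rmin_r d1 d2).
  specialize (H1 S ltac:(lra)). specialize (H2 S ltac:(lra)). lra.
Qed.

(* A function vanishing at 0+ whose derivative is bounded above there is O(S):
   by the mean value theorem h(S) <= h(e) + M (S - e) with e -> 0. *)
Lemma linear_of_limsup h dh : C1_open h dh 0 1 -> vanishes_at_0 h ->
  limsup_deriv_0_finite h -> linear_at_0 h.
Proof.
  intros HC Hs [M0 [d0 [Hd0 Hl]]].
  exists (Rmax M0 0 + 1), (Rmin d0 1). split; [apply Rmin_glb_lt; lra|].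
  intros S HS. pose proof (Rmin_l d0 1). pose proof (Rmin_r d0 1).
  pose proof (Rmax_l M0 0). pose proof (Rmax_r M0 0).
  apply Rnot_lt_le. intros Hlt.
  destruct (Hs (h S - (Rmax M0 0 + 1) * S) ltac:(lra)) as [d [Hd Hd']].
  set (e := Rmin (d/2) (S/2)).
  assert (0 < e) by (unfold e; apply Rmin_glb_lt; lra).
  assert (e <= S/2) by apply Rmin_r. assert (e <= d/2) by apply Rmin_l.
  specialize (Hd' e ltac:(lra)).
  destruct (MVT_cor2 h dh e S ltac:(lra)) as [c [Hc Hcr]].
  { intros c Hc. apply HC. lra. }
  assert (dh c <= M0) by (apply (Hl c); [lra|apply HC; lra]).
  assert (dh c * (S - e) <= Rmax M0 0 * S) by nra.
  nra.
Qed.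

Lemma derivable_reflect h x l : derivable_pt_lim h (1 - x) l -> derivable_pt_lim (reflect h) x (- l).
Proof.
  intros H. replace (- l) with (l * (0 - 1)) by ring.
  apply (derivable_pt_lim_comp (fun T => 1 - T) h); [|exact H].
  apply derivable_pt_lim_minus; [apply derivable_pt_lim_const|apply derivable_pt_lim_id].
Qed.

Lemma limsup_reflect h dh : C1_open h dh 0 1 -> liminf_deriv_1_finite h ->
  limsup_deriv_0_finite (reflect h).
Proof.
  intros HC [M [d [Hd Hl]]]. exists (- M), (Rmin d 1). split; [apply Rmin_glb_lt; lra|].
  intros S l HS Hder. pose proof (Rmin_l d 1). pose proof (Rmin_r d 1).
  assert (Hh : derivable_pt_lim h (1 - S) (dh (1 - S))) by (apply HC; lra).
  pose proof (uniqueness_limite _ _ _ _ Hder (derivable_reflect _ _ _ Hh)).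
  pose proof (Hl (1 - S) (dh (1 - S)) ltac:(lra) Hh). lra.
Qed.

Lemma C1_reflect h dh : C1_open h dh 0 1 -> C1_open (reflect h) (fun x => - dh (1 - x)) 0 1.
Proof.
  intros HC x Hx. split.
  - apply derivable_reflect, HC. lra.
  - apply (continuity_pt_opp (fun x => dh (1 - x))). apply cpt_comp.
    + apply cpt_minus; [apply cpt_const|apply cpt_id].
    + apply HC. lra.
Qed.

Lemma linear_of_dominated P Q : dominated_at_0 P Q -> (forall S, 0 < S < 1 -> 0 <= P S) ->
  linear_at_0 Q -> linear_at_0 P.
Proof.
  intros Hdom HP [M [d [Hd HQ]]]. destruct (Hdom 1 Rlt_0_1) as [d1 [Hd1 H1]].
  exists (Rabs M), (Rmin d (Rmin d1 1)). split; [repeat apply Rmin_glb_lt; lra|].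
  intros S HS. pose proof (Rmin_l d (Rmin d1 1)). pose proof (Rmin_r d (Rmin d1 1)).
  pose proof (Rmin_l d1 1). pose proof (Rmin_r d1 1). pose proof (Rle_abs M).
  specialize (HQ S ltac:(lra)). specialize (H1 S ltac:(lra)). nra.
Qed.

Section LowerEnd.
Variables (P Q ka kb : R -> R) (ca cb r0 K rho : R).
Hypothesis HPQ : forall S, 0 < S < 1 -> 0 <= P S /\ 0 <= Q S.
Hypothesis Hk : forall t, r0 <= t -> 0 < ka t <= K /\ 0 < kb t <= K /\ ka t <= rho * kb t.

Lemma term_lower_bound (c : R) (k h : R -> R) :
  (forall t, r0 <= t -> 0 < k t <= K) -> (forall S, 0 < S < 1 -> 0 <= h S) -> (0 <= c \/ linear_at_0 h) ->
  exists d M, 0 < d /\ 0 <= M /\ forall t S, r0 <= t -> 0 < S < d -> - M * S <= c * k t * h S.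
Proof.
  intros Hkt Hh [Hc|[M [d [Hd Hlin]]]].
  - exists 1, 0. repeat split; try lra. intros t S Ht HS.
    pose proof (Hkt t Ht). pose proof (Hh S ltac:(lra)).
    assert (0 <= c * k t * h S) by (repeat apply Rmult_le_pos; lra). lra.
  - exists (Rmin d 1), (Rabs c * K * Rabs M). split; [apply Rmin_glb_lt; lra|].
    split; [pose proof (Rabs_pos c); pose proof (Rabs_pos M); pose proof (Hkt r0 (Rle_refl r0)); apply Rmult_le_pos; nra|].
    intros t S Ht HS. pose proof (Rmin_l d 1). pose proof (Rmin_r d 1).
    pose proof (Hkt t Ht). pose proof (Hh S ltac:(lra)). specialize (Hlin S ltac:(lra)).
    pose proof (Rle_abs M). pose proof (Rabs_pos c).
    assert (Hhb : h S <= Rabs M * S) by nra.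
    assert (Habs : Rabs (c * k t * h S) <= Rabs c * K * (Rabs M * S)).
    { rewrite !Rabs_mult, (Rabs_pos_eq (k t)), (Rabs_pos_eq (h S)) by lra.
      apply Rmult_le_compat; nra. }
    pose proof (Rabs_le_between (c * k t * h S) (Rabs c * K * (Rabs M * S))) as Hb.
    destruct (proj1 Hb Habs). nra.
Qed.

Lemma lower_barrier_of_terms : (0 <= ca \/ linear_at_0 P) -> (cb <= 0 \/ linear_at_0 Q) ->
  lower_barrier_cond (fun t S => ca * ka t * P S - cb * kb t * Q S) r0.
Proof.
  intros HP HQ.
  destruct (term_lower_bound ca ka P) as [d1 [M1 [Hd1 [HM1 H1]]]]; auto.
  { intros t Ht. apply Hk in Ht. lra. } { intros S HS. apply HPQ in HS. lra. }
  destruct (term_lower_bound (- cb) kb Q) as [d2 [M2 [Hd2 [HM2 H2]]]]; auto.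
  { intros t Ht. apply Hk in Ht. lra. } { intros S HS. apply HPQ in HS. lra. }
  { destruct HQ; [left; lra|right; auto]. }
  exists (Rmin d1 d2), (M1 + M2 + 1). split; [apply Rmin_glb_lt; auto|split; [lra|]].
  intros t S Ht HS. pose proof (Rmin_l d1 d2). pose proof (Rmin_r d1 d2).
  specialize (H1 t S Ht ltac:(lra)). specialize (H2 t S Ht ltac:(lra)). nra.
Qed.

(* Both coefficients negative: near 0 the term -cb kb Q >= 0 dominates ca ka P. *)
Lemma lower_barrier_of_dominance : ca < 0 -> cb < 0 -> dominated_at_0 P Q ->
  lower_barrier_cond (fun t S => ca * ka t * P S - cb * kb t * Q S) r0.
Proof.
  intros Hca Hcb Hdom.
  assert (Hrho : 0 < rho) by (destruct (Hk r0 (Rle_refl r0)) as [? [? ?]]; nra).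
  destruct (Hdom ((- ca) * rho / (- cb))) as [d [Hd H]].
  { apply Rdiv_lt_0_compat; nra. }
  exists (Rmin d 1), 1. split; [apply Rmin_glb_lt; lra|split; [lra|]].
  intros t S Ht HS. pose proof (Rmin_l d 1). pose proof (Rmin_r d 1).
  destruct (Hk t Ht) as [Hka [Hkb Hratio]]. destruct (HPQ S ltac:(lra)) as [HP HQ].
  specialize (H S ltac:(lra)).
  assert (Hdom' : (- ca) * rho * P S <= (- cb) * Q S).
  { apply (Rmult_le_compat_l (- cb)) in H; [|lra].
    replace (- cb * (- ca * rho / - cb * P S)) with ((- ca) * rho * P S) in H by (field; lra). exact H. }
  assert (0 <= (- ca) * P S * (rho * kb t - ka t)) by (apply Rmult_le_pos; nra).
  nra.
Qed.

Lemma lower_end_barrier : dominated_at_0 P Q ->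
  linear_at_0 Q \/ (cb <= 0 /\ (0 <= ca \/ linear_at_0 P)) \/ (ca < 0 /\ cb < 0) ->
  lower_barrier_cond (fun t S => ca * ka t * P S - cb * kb t * Q S) r0.
Proof.
  intros Hdom [HQ|[[Hcb HP]|[Hca Hcb]]].
  - apply lower_barrier_of_terms; right; auto.
    apply (linear_of_dominated P Q Hdom); auto. intros S HS. apply HPQ; auto.
  - apply lower_barrier_of_terms; auto.
  - apply lower_barrier_of_dominance; auto.
Qed.
End LowerEnd.

Lemma upper_barrier_of_reflection (a b P Q : R -> R) r0 :
  lower_barrier_cond (fun t T => b t * reflect P T - a t * reflect Q T) r0 ->
  upper_barrier_cond (fun t S => a t * Q S - b t * P S) r0.
Proof.
  intros [d [K [Hd [HK H]]]]. exists d, K. repeat split; auto.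
  intros t S Ht HS. specialize (H t (1 - S) Ht ltac:(lra)). unfold reflect in H.
  replace (1 - (1 - S)) with S in H by ring. lra.
Qed.

(* The nonlinear coefficients: G(c r^(1-n)) = c k(r) with k(r) = g(|c| r^(1-n)) r^(1-n),
   a weight bounded between a0 r^(1-n) and g(|c| r0^(1-n)) r^(1-n) for r >= r0. *)
Definition gsum (l : list (R * R)%type) (s : R) : R :=
  fold_right (fun p acc => fst p * rpow s (snd p) + acc) 0 l.

Lemma rpow_nonneg s a : 0 <= rpow s a.
Proof. unfold rpow, Rpower. destruct Rle_dec; [lra|left; apply exp_pos]. Qed.

Lemma rpow_mono s t a : 0 < a -> 0 <= s <= t -> rpow s a <= rpow t a.
Proof.
  intros Ha Hst. unfold rpow. destruct (Rle_dec s 0); destruct (Rle_dec t 0); try lra.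
  - unfold Rpower; left; apply exp_pos.
  - apply Rle_Rpower_l; lra.
Qed.

Lemma rpow_continuous s a : 0 < s -> continuity_pt (fun x => rpow x a) s.
Proof.
  intros Hs. apply continuity_pt_filterlim. apply (continuous_ext_loc (fun x => rpow x a) (fun x => Rpower x a) s).
  - exists (mkposreal s Hs). intros y Hy. apply Rabs_def2 in Hy. unfold minus, plus, opp in Hy. simpl in Hy.
    unfold rpow. destruct Rle_dec; [lra|auto].
  - apply continuity_pt_filterlim, derivable_continuous_pt.
    exists (a * Rpower s (a - 1)). apply derivable_pt_lim_power; auto.
Qed.

Definition admissible_terms (l : list (R * R)%type) : Prop := List.Forall (fun p => 0 <= fst p /\ 0 < snd p) l.

Lemma gsum_nonneg l s : admissible_terms l -> 0 <= gsum l s.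
Proof.
  intros Hl. induction Hl as [|p l' [Hp1 Hp2] HF IH]; simpl; [lra|].
  pose proof (rpow_nonneg s (snd p)). fold (gsum l' s). nra.
Qed.

Lemma gsum_mono l s t : admissible_terms l -> 0 <= s <= t -> gsum l s <= gsum l t.
Proof.
  intros Hl Hst. induction Hl as [|p l' [Hp1 Hp2] HF IH]; simpl; [lra|].
  pose proof (rpow_mono s t (snd p) Hp2 Hst). fold (gsum l' s) (gsum l' t). nra.
Qed.

Lemma gsum_continuous l s : admissible_terms l -> 0 < s -> continuity_pt (gsum l) s.
Proof.
  intros Hl Hs. induction Hl as [|p l' [Hp1 Hp2] HF IH]; simpl; [apply cpt_const|].
  apply (cpt_plus (fun y => fst p * rpow y (snd p)) (gsum l')); auto.
  apply cpt_mult; [apply cpt_const|]. apply rpow_continuous; auto.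
Qed.

Definition weight (n : nat) (r : R) : R := / r ^ (n - 1).
Definition kcoef (n : nat) (a0 : R) (l : list (R * R)%type) (c r : R) : R :=
  gfun a0 l (Rabs (c * weight n r)) * weight n r.

Lemma rhsF_separated n a01 l1 a02 l2 c1 c2 dpc f1 f2 :
  rhsF n a01 l1 a02 l2 c1 c2 dpc f1 f2 =
  fun r S => c2 * kcoef n a02 l2 c2 r * Ffun dpc f2 S - c1 * kcoef n a01 l1 c1 r * Ffun dpc f1 S.
Proof.
  apply functional_extensionality; intros r. apply functional_extensionality; intros S.
  unfold rhsF, Gfun, kcoef, weight. ring.
Qed.

Lemma weight_bounds n r0 r : 0 < r0 <= r -> 0 < weight n r <= weight n r0.
Proof.
  intros Hr. unfold weight. split; [apply Rinv_0_lt_compat, pow_lt; lra|].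
  apply Rinv_le_contravar; [apply pow_lt; lra|apply pow_incr; lra].
Qed.

Lemma kcoef_bounds n a0 l c r0 : g_admissible a0 l -> 0 < r0 ->
  forall r, r0 <= r -> a0 * weight n r <= kcoef n a0 l c r <= gfun a0 l (Rabs c * weight n r0) * weight n r.
Proof.
  intros [Ha0 [Hl _]] Hr0 r Hr. pose proof (weight_bounds n r0 r ltac:(lra)) as Hw.
  unfold kcoef, gfun. fold (gsum l (Rabs (c * weight n r))). fold (gsum l (Rabs c * weight n r0)).
  pose proof (gsum_nonneg l (Rabs (c * weight n r)) Hl).
  assert (gsum l (Rabs (c * weight n r)) <= gsum l (Rabs c * weight n r0)).
  { apply gsum_mono; auto. rewrite Rabs_mult, (Rabs_pos_eq (weight n r)) by lra.
    split; [apply Rmult_le_pos; [apply Rabs_pos|lra]|]. apply Rmult_le_compat_l; [apply Rabs_pos|lra]. }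
  split; apply Rmult_le_compat_r; lra.
Qed.

(* For c = 0 the coefficient vanishes identically; otherwise |c r^(1-n)| > 0, where g is continuous. *)
Lemma coefficient_continuous n a0 l c r : g_admissible a0 l -> 0 < r ->
  continuity_pt (fun r => c * kcoef n a0 l c r) r.
Proof.
  intros [Ha0 [Hl _]] Hr. unfold kcoef, gfun.
  destruct (Req_dec c 0) as [->|Hc].
  { apply (continuity_pt_ext (fun _ => 0)); [intros; ring|apply cpt_const]. }
  assert (Hw : continuity_pt (weight n) r).
  { apply (continuity_pt_inv (fun r => r ^ (n - 1))); [apply derivable_continuous_pt, derivable_pt_pow|].
    apply pow_nonzero; lra. }
  assert (Hwpos : 0 < weight n r) by (apply Rinv_0_lt_compat, pow_lt; lra).
  apply cpt_mult; [apply cpt_const|]. apply cpt_mult; auto.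
  apply cpt_plus; [apply cpt_const|]. change (continuity_pt (fun y => gsum l (Rabs (c * weight n y))) r).
  apply (cpt_comp (fun r => Rabs (c * weight n r))); [apply cpt_abs, (cpt_mult (fun _ => c)); auto; apply cpt_const|].
  apply gsum_continuous; auto. apply Rabs_pos_lt. apply Rmult_integral_contrapositive_currified; lra.
Qed.

Lemma cont_closed_reflect f : cont_closed f 0 1 -> cont_closed (reflect f) 0 1.
Proof.
  intros Hc x Hx eps He. destruct (Hc (1 - x) ltac:(lra) eps He) as [d [Hd H]].
  exists d. split; auto. intros y Hy Hyx. apply H; [lra|].
  replace (1 - y - (1 - x)) with (- (y - x)) by ring. rewrite Rabs_Ropp. auto.
Qed.

Lemma increasing_of_pos_derivative f df : C1_open f df 0 1 -> (forall x, 0 < x < 1 -> 0 < df x) ->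
  forall x y, 0 < x -> x < y -> y < 1 -> f x < f y.
Proof.
  intros Hd Hdf x y Hx Hxy Hy. destruct (MVT_cor2 f df x y Hxy) as [c [Hc Hcr]].
  { intros c Hc. apply Hd. lra. }
  assert (0 < df c) by (apply Hdf; lra). nra.
Qed.

Lemma pos_of_increasing f : cont_closed f 0 1 -> f 0 = 0 ->
  (forall x y, 0 < x -> x < y -> y < 1 -> f x < f y) -> forall x, 0 < x < 1 -> 0 < f x.
Proof.
  intros Hc H0 Hinc x Hx.
  assert (Hh : 0 <= f (x/2)).
  { apply Rnot_lt_le. intros Hlt.
    destruct (Hc 0 ltac:(lra) (- f (x/2)) ltac:(lra)) as [d [Hd0 Hd']].
    set (e := Rmin (d/2) (x/4)).
    assert (0 < e) by (unfold e; apply Rmin_glb_lt; lra).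
    assert (e <= x/4) by apply Rmin_r. assert (e <= d/2) by apply Rmin_l.
    specialize (Hd' e ltac:(lra) ltac:(rewrite Rminus_0_r, Rabs_pos_eq; lra)).
    rewrite H0, Rminus_0_r in Hd'. apply Rabs_def2 in Hd'.
    specialize (Hinc e (x/2) ltac:(lra) ltac:(lra) ltac:(lra)). lra. }
  specialize (Hinc (x/2) x ltac:(lra) ltac:(lra) ltac:(lra)). lra.
Qed.

Lemma vanishes_of_continuous f : cont_closed f 0 1 -> f 0 = 0 -> vanishes_at_0 f.
Proof.
  intros Hc H0 e He. destruct (Hc 0 ltac:(lra) e He) as [d [Hd H]].
  exists (Rmin d 1). split; [apply Rmin_glb_lt; lra|]. intros S HS.
  pose proof (Rmin_l d 1). pose proof (Rmin_r d 1).
  specialize (H S ltac:(lra) ltac:(rewrite Rminus_0_r, Rabs_pos_eq; lra)).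
  rewrite H0, Rminus_0_r in H. apply Rabs_def2 in H. lra.
Qed.

Lemma vanishes_of_blowup g : (forall M, exists d, 0 < d /\ forall S, 0 < S < d -> M < g S) ->
  vanishes_at_0 (fun S => / g S).
Proof.
  intros H e He. destruct (H (/ e)) as [d [Hd H']]. exists d. split; auto.
  intros S HS. specialize (H' S HS). pose proof (Rinv_0_lt_compat e He).
  rewrite <- (Rinv_inv e). apply Rinv_lt_contravar; nra.
Qed.

Lemma C1_Ffun dpc ddpc f df : C1_open dpc ddpc 0 1 -> C1_open f df 0 1 ->
  (forall x, 0 < x < 1 -> 0 < dpc x * f x) ->
  C1_open (Ffun dpc f) (fun x => - (ddpc x * f x + dpc x * df x) / (dpc x * f x) ^ 2) 0 1.
Proof.
  intros Hp Hf Hpos x Hx. pose proof (Hpos x Hx).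
  assert (Hpf : continuity_pt (fun y => dpc y * f y) x)
    by (apply cpt_mult; [apply (C1_continuity _ _ x Hp Hx)|apply (C1_continuity _ _ x Hf Hx)]).
  split.
  - unfold Ffun. apply is_derive_Reals. apply (is_derive_inv (fun y => dpc y * f y)); [|lra].
    apply is_derive_Reals. apply (derivable_pt_lim_mult dpc f x); [apply Hp|apply Hf]; auto.
  - apply cpt_mult.
    + apply (continuity_pt_opp (fun y => ddpc y * f y + dpc y * df y)).
      apply cpt_plus; apply cpt_mult; first [apply (C1_continuity _ _ x Hp Hx) | apply (C1_continuity _ _ x Hf Hx)
        | apply (Hp x Hx) | apply (Hf x Hx)].
    + apply (continuity_pt_inv (fun y => (dpc y * f y) ^ 2)); [|apply pow_nonzero; lra].
      apply (cpt_comp (fun y => dpc y * f y) (fun u => u ^ 2)); auto.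
      apply derivable_continuous_pt, derivable_pt_pow.
Qed.

Lemma Ffun_dominated dpc fs fb :
  (forall x, 0 < x < 1 -> 0 < dpc x /\ 0 < fs x /\ 0 < fb x) ->
  vanishes_at_0 fs -> (exists m d, 0 < m /\ 0 < d /\ forall S, 0 < S < d -> m <= fb S) ->
  dominated_at_0 (Ffun dpc fb) (Ffun dpc fs).
Proof.
  intros Hpos Hs [m [d0 [Hm [Hd0 Hb]]]] r Hr.
  destruct (Hs (m / r)) as [d [Hd H]]; [apply Rdiv_lt_0_compat; lra|].
  exists (Rmin d (Rmin d0 1)). split; [repeat apply Rmin_glb_lt; lra|].
  intros S HS. pose proof (Rmin_l d (Rmin d0 1)). pose proof (Rmin_r d (Rmin d0 1)).
  pose proof (Rmin_l d0 1). pose proof (Rmin_r d0 1).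
  destruct (Hpos S ltac:(lra)) as [Hp [Hfs Hfb]]. specialize (H S ltac:(lra)). specialize (Hb S ltac:(lra)).
  assert (Hrs : r * fs S <= fb S).
  { apply Rlt_le. apply Rlt_le_trans with m; [|lra].
    apply (Rmult_lt_reg_r (/ r)); [apply Rinv_0_lt_compat; lra|].
    replace (r * fs S * / r) with (fs S) by (field; lra). exact H. }
  unfold Ffun. replace (r * / (dpc S * fb S)) with (r * fs S * / (dpc S * fs S * fb S)) by (field; lra).
  replace (/ (dpc S * fs S)) with (fb S * / (dpc S * fs S * fb S)) by (field; lra).
  apply Rmult_le_compat_r; auto. left; apply Rinv_0_lt_compat. repeat apply Rmult_lt_0_compat; lra.
Qed.

Section Profiles.
Variables (f1 f2 df1 df2 dpc ddpc : R -> R).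
Hypotheses (hf1c : cont_closed f1 0 1) (hf2c : cont_closed f2 0 1).
Hypotheses (hf1d : C1_open f1 df1 0 1) (hf2d : C1_open f2 df2 0 1).
Hypotheses (hf10 : f1 0 = 0) (hf21 : f2 1 = 0).
Hypotheses (hdf1 : forall x, 0 < x < 1 -> 0 < df1 x) (hdf2 : forall x, 0 < x < 1 -> df2 x < 0).
Hypotheses (hdpc : C1_open dpc ddpc 0 1) (hdpc_pos : forall x, 0 < x < 1 -> 0 < dpc x).
Hypothesis hP1 : forall M, exists delta, 0 < delta /\ forall S, 0 < S < delta -> M < dpc S * f1 S.
Hypothesis hP2 : forall M, exists delta, 0 < delta /\ forall S, 1 - delta < S < 1 -> M < dpc S * f2 S.

Lemma f1_increasing : forall x y, 0 < x -> x < y -> y < 1 -> f1 x < f1 y.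
Proof. exact (increasing_of_pos_derivative f1 df1 hf1d hdf1). Qed.

(* f2 is handled through its reflection, which is increasing and vanishes at 0. *)
Lemma f2_reflect_increasing : forall x y, 0 < x -> x < y -> y < 1 -> reflect f2 x < reflect f2 y.
Proof.
  apply (increasing_of_pos_derivative _ _ (C1_reflect f2 df2 hf2d)).
  intros x Hx. pose proof (hdf2 (1 - x) ltac:(lra)). lra.
Qed.

Lemma f_pos x : 0 < x < 1 -> 0 < dpc x /\ 0 < f1 x /\ 0 < f2 x.
Proof.
  intros Hx. split; [auto|split].
  - apply (pos_of_increasing f1); auto. exact f1_increasing.
  - replace x with (1 - (1 - x)) by ring.
    apply (pos_of_increasing (reflect f2) (cont_closed_reflect f2 hf2c)); [unfold reflect; rewrite Rminus_0_r; auto|exact f2_reflect_increasing|lra].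
Qed.

Lemma profiles_pos S : 0 < S < 1 -> 0 < Ffun dpc f1 S /\ 0 < Ffun dpc f2 S.
Proof.
  intros HS. destruct (f_pos S HS) as [Hp [H1 H2]]. unfold Ffun.
  split; apply Rinv_0_lt_compat, Rmult_lt_0_compat; auto.
Qed.

Lemma F1_C1 : C1_open (Ffun dpc f1) (fun x => - (ddpc x * f1 x + dpc x * df1 x) / (dpc x * f1 x) ^ 2) 0 1.
Proof. apply C1_Ffun; auto. intros x Hx. destruct (f_pos x Hx) as [? [? ?]]. nra. Qed.

Lemma F2_C1 : C1_open (Ffun dpc f2) (fun x => - (ddpc x * f2 x + dpc x * df2 x) / (dpc x * f2 x) ^ 2) 0 1.
Proof. apply C1_Ffun; auto. intros x Hx. destruct (f_pos x Hx) as [? [? ?]]. nra. Qed.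

(* Near 0, f1 -> 0 while f2 >= f2(1/2); near 1, f2 -> 0 while f1 >= f1(1/2). *)
Lemma profile_domination_at_0 : dominated_at_0 (Ffun dpc f2) (Ffun dpc f1).
Proof.
  apply Ffun_dominated; [exact f_pos|apply vanishes_of_continuous; auto|].
  exists (f2 (1/2)), (1/2). split; [apply f_pos; lra|split; [lra|]].
  intros S HS. left. replace S with (1 - (1 - S)) by ring. replace (1/2) with (1 - 1/2) at 1 by field.
  apply f2_reflect_increasing; lra.
Qed.

Lemma profile_domination_at_1 : dominated_at_0 (reflect (Ffun dpc f1)) (reflect (Ffun dpc f2)).
Proof.
  apply (Ffun_dominated (reflect dpc) (reflect f2) (reflect f1)).
  - intros x Hx. destruct (f_pos (1 - x) ltac:(lra)) as [? [? ?]]. unfold reflect. auto.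
  - apply vanishes_of_continuous; [apply cont_closed_reflect; auto|unfold reflect; rewrite Rminus_0_r; auto].
  - exists (f1 (1/2)), (1/2). split; [apply f_pos; lra|split; [lra|]].
    intros S HS. left. apply f1_increasing; unfold reflect; lra.
Qed.

Lemma F1_vanishes_at_0 : vanishes_at_0 (Ffun dpc f1).
Proof. apply (vanishes_of_blowup (fun S => dpc S * f1 S)), hP1. Qed.

Lemma F2_reflect_vanishes_at_0 : vanishes_at_0 (reflect (Ffun dpc f2)).
Proof.
  apply (vanishes_of_blowup (fun T => dpc (1 - T) * f2 (1 - T))).
  intros M. destruct (hP2 M) as [d [Hd H]]. exists d. split; auto. intros S HS. apply H. lra.
Qed.

(* The derivative conditions (C1)-(C4) make the corresponding profile O(distance to the end). *)
Lemma linear_F1_at_0 : limsup_deriv_0_finite (Ffun dpc f1) -> linear_at_0 (Ffun dpc f1).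
Proof. apply (linear_of_limsup _ _ F1_C1 F1_vanishes_at_0). Qed.

Lemma linear_F2_at_0 : limsup_deriv_0_finite (Ffun dpc f2) -> linear_at_0 (Ffun dpc f2).
Proof.
  apply (linear_of_limsup _ _ F2_C1).
  apply (vanishes_of_dominated _ _ profile_domination_at_0 F1_vanishes_at_0).
Qed.

Lemma linear_F2_at_1 : liminf_deriv_1_finite (Ffun dpc f2) -> linear_at_0 (reflect (Ffun dpc f2)).
Proof.
  intros H. apply (linear_of_limsup _ _ (C1_reflect _ _ F2_C1) F2_reflect_vanishes_at_0).
  apply (limsup_reflect _ _ F2_C1 H).
Qed.

Lemma linear_F1_at_1 : liminf_deriv_1_finite (Ffun dpc f1) -> linear_at_0 (reflect (Ffun dpc f1)).
Proof.
  intros H. apply (linear_of_limsup _ _ (C1_reflect _ _ F1_C1)).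
  - apply (vanishes_of_dominated _ _ profile_domination_at_1 F2_reflect_vanishes_at_0).
  - apply (limsup_reflect _ _ F1_C1 H).
Qed.

Lemma profile_facts :
  (forall S, 0 < S < 1 -> 0 < Ffun dpc f1 S /\ 0 < Ffun dpc f2 S) /\
  (exists dF1 dF2, C1_open (Ffun dpc f1) dF1 0 1 /\ C1_open (Ffun dpc f2) dF2 0 1) /\
  dominated_at_0 (Ffun dpc f2) (Ffun dpc f1) /\
  dominated_at_0 (reflect (Ffun dpc f1)) (reflect (Ffun dpc f2)) /\
  (limsup_deriv_0_finite (Ffun dpc f1) -> linear_at_0 (Ffun dpc f1)) /\
  (limsup_deriv_0_finite (Ffun dpc f2) -> linear_at_0 (Ffun dpc f2)) /\
  (liminf_deriv_1_finite (Ffun dpc f2) -> linear_at_0 (reflect (Ffun dpc f2))) /\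
  (liminf_deriv_1_finite (Ffun dpc f1) -> linear_at_0 (reflect (Ffun dpc f1))).
Proof.
  split; [exact profiles_pos|split; [do 2 eexists; split; [exact F1_C1|exact F2_C1]|]].
  repeat split; [exact profile_domination_at_0|exact profile_domination_at_1|exact linear_F1_at_0
    |exact linear_F2_at_0|exact linear_F2_at_1|exact linear_F1_at_1].
Qed.
End Profiles.

Lemma weights_comparable n a01 l1 a02 l2 c1 c2 r0 :
  g_admissible a01 l1 -> g_admissible a02 l2 -> 0 < r0 ->
  exists K rho, forall t, r0 <= t ->
    let k1 := kcoef n a01 l1 c1 t in let k2 := kcoef n a02 l2 c2 t in
    (0 < k1 <= K /\ 0 < k2 <= K /\ k1 <= rho * k2) /\ (0 < k2 <= K /\ 0 < k1 <= K /\ k2 <= rho * k1).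
Proof.
  intros Hg1 Hg2 Hr0.
  set (W := weight n r0). set (M1 := gfun a01 l1 (Rabs c1 * W)). set (M2 := gfun a02 l2 (Rabs c2 * W)).
  destruct Hg1 as [Ha01 Hrest1]. destruct Hg2 as [Ha02 Hrest2].
  exists ((M1 + M2) * W), (M1 / a02 + M2 / a01). intros t Ht k1 k2.
  pose proof (kcoef_bounds n a01 l1 c1 r0 (conj Ha01 Hrest1) Hr0 t Ht) as Hk1.
  pose proof (kcoef_bounds n a02 l2 c2 r0 (conj Ha02 Hrest2) Hr0 t Ht) as Hk2.
  fold W M1 M2 k1 k2 in Hk1, Hk2.
  pose proof (weight_bounds n r0 t ltac:(lra)) as Hw. fold W in Hw.
  assert (HM1pos : a01 <= M1) by (apply (Rmult_le_reg_r (weight n t)); lra).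
  assert (HM2pos : a02 <= M2) by (apply (Rmult_le_reg_r (weight n t)); lra).
  assert (Hr1 : 0 <= M1 / a02) by (apply Rmult_le_pos; [lra|left; apply Rinv_0_lt_compat; lra]).
  assert (Hr2 : 0 <= M2 / a01) by (apply Rmult_le_pos; [lra|left; apply Rinv_0_lt_compat; lra]).
  assert (HM1 : M1 * weight n t <= M1 / a02 * k2).
  { replace (M1 * weight n t) with (M1 / a02 * (a02 * weight n t)) by (field; lra).
    apply Rmult_le_compat_l; lra. }
  assert (HM2 : M2 * weight n t <= M2 / a01 * k1).
  { replace (M2 * weight n t) with (M2 / a01 * (a01 * weight n t)) by (field; lra).
    apply Rmult_le_compat_l; lra. }
  assert (M1 * weight n t <= M1 * W) by (apply Rmult_le_compat_l; lra).
  assert (M2 * weight n t <= M2 * W) by (apply Rmult_le_compat_l; lra).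
  assert (0 < a01 * weight n t) by nra. assert (0 < a02 * weight n t) by nra.
  assert (0 <= M2 / a01 * k2) by nra. assert (0 <= M1 / a02 * k1) by nra.
  repeat split; nra.
Qed.

(* Which mechanism yields the barrier at each end, case by case: the lower end for the
   field c2 k2 F2 - c1 k1 F1, the upper end for its reflection c1 k1 F1 - c2 k2 F2. *)
Lemma end_mechanisms (F1 F2 : R -> R) c1 c2 :
  (limsup_deriv_0_finite F1 -> linear_at_0 F1) -> (limsup_deriv_0_finite F2 -> linear_at_0 F2) ->
  (liminf_deriv_1_finite F2 -> linear_at_0 (reflect F2)) -> (liminf_deriv_1_finite F1 -> linear_at_0 (reflect F1)) ->
  ( (c2 <= 0 < c1 /\ limsup_deriv_0_finite F1)
    \/ (c1 = 0 /\ c2 < 0 /\ limsup_deriv_0_finite F2)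
    \/ (c1 <= 0 < c2 /\ liminf_deriv_1_finite F2)
    \/ (c2 = 0 /\ c1 < 0 /\ liminf_deriv_1_finite F1)
    \/ (0 < c1 /\ 0 < c2 /\ limsup_deriv_0_finite F1 /\ liminf_deriv_1_finite F2)
    \/ (c1 < 0 /\ c2 < 0) ) ->
  (linear_at_0 F1 \/ (c1 <= 0 /\ (0 <= c2 \/ linear_at_0 F2)) \/ (c2 < 0 /\ c1 < 0)) /\
  (linear_at_0 (reflect F2) \/ (c2 <= 0 /\ (0 <= c1 \/ linear_at_0 (reflect F1))) \/ (c1 < 0 /\ c2 < 0)).
Proof.
  intros L1 L4 L3 L2 Hcase.
  destruct Hcase as [[? H]|[[? [? H]]|[[? H]|[[? [? H]]|[[? [? [H H']]]|[? ?]]]]]];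
  split; solve [ left; auto
               | right; left; split; [lra|first [left; lra | right; auto]]
               | right; right; lra ].
Qed.

Theorem theorem2p2
  (n : nat) (hn : (2 <= n)%nat)
  (a01 : R) (l1 : list (R * R)) (a02 : R) (l2 : list (R * R))
  (hg1 : g_admissible a01 l1) (hg2 : g_admissible a02 l2)
  (f1 f2 df1 df2 : R -> R)
  (hf1c : cont_closed f1 0 1) (hf2c : cont_closed f2 0 1)
  (hf1d : C1_open f1 df1 0 1) (hf2d : C1_open f2 df2 0 1)
  (hf10 : f1 0 = 0) (hf21 : f2 1 = 0)
  (hdf1 : forall x, 0 < x < 1 -> 0 < df1 x)
  (hdf2 : forall x, 0 < x < 1 -> df2 x < 0)
  (pc dpc ddpc : R -> R)
  (hpc : forall x, 0 < x < 1 -> derivable_pt_lim pc x (dpc x))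
  (hdpc : C1_open dpc ddpc 0 1)
  (hdpc_pos : forall x, 0 < x < 1 -> 0 < dpc x)
  (hP1 : forall M, exists delta, 0 < delta /\
           forall S, 0 < S < delta -> M < dpc S * f1 S)
  (hP2 : forall M, exists delta, 0 < delta /\
           forall S, 1 - delta < S < 1 -> M < dpc S * f2 S)
  (c1 c2 r0 s0 : R) (hc : 0 < c1 ^ 2 + c2 ^ 2)
  (hr0 : 0 < r0) (hs0 : 0 < s0 < 1) :
  ( (c2 <= 0 < c1 /\ limsup_deriv_0_finite (Ffun dpc f1))
    \/ (c1 = 0 /\ c2 < 0 /\ limsup_deriv_0_finite (Ffun dpc f2))
    \/ (c1 <= 0 < c2 /\ liminf_deriv_1_finite (Ffun dpc f2))
    \/ (c2 = 0 /\ c1 < 0 /\ liminf_deriv_1_finite (Ffun dpc f1))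
    \/ (0 < c1 /\ 0 < c2 /\ limsup_deriv_0_finite (Ffun dpc f1)
                          /\ liminf_deriv_1_finite (Ffun dpc f2))
    \/ (c1 < 0 /\ c2 < 0) ) ->
  exists S : R -> R,
    global_solution (rhsF n a01 l1 a02 l2 c1 c2 dpc f1 f2) r0 s0 S.
Proof.
  intros Hcase. rewrite rhsF_separated.
  destruct (profile_facts f1 f2 df1 df2 dpc ddpc hf1c hf2c hf1d hf2d hf10 hf21 hdf1 hdf2 hdpc hdpc_pos hP1 hP2)
    as [Hpos [[dF1 [dF2 [HF1 HF2]]] [Hdom0 [Hdom1 [L1 [L4 [L3 L2]]]]]]].
  destruct (weights_comparable n a01 l1 a02 l2 c1 c2 r0 hg1 hg2 hr0) as [K [rho Hk]].
  destruct (end_mechanisms _ _ c1 c2 L1 L4 L3 L2 Hcase) as [Hlower Hupper].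
  apply (barrier_global_existence _ _ _ _ _ _ r0 s0 hs0 HF1 HF2).
  - intros t Ht. apply coefficient_continuous; auto; lra.
  - intros t Ht. apply coefficient_continuous; auto; lra.
  - apply (lower_end_barrier _ _ _ _ c2 c1 r0 K rho); auto.
    + intros S HS. destruct (Hpos S HS). lra.
    + intros t Ht. apply (Hk t Ht).
  - apply upper_barrier_of_reflection. apply (lower_end_barrier _ _ _ _ c1 c2 r0 K rho); auto.
    + intros S HS. destruct (Hpos (1 - S) ltac:(lra)). unfold reflect. lra.
    + intros t Ht. apply (Hk t Ht).
Qed.
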